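(* Let $s$ be a continuous proper scoring rule with convex exposure on an $n$-outcome forecast domain $\mathcal{D}$, with expected reward function $G$ and exposure function $\mathbf{g}$. Fix forecasts $\mathbf{p}_1,\dots,\mathbf{p}_m\in\mathcal{D}$ and non-negative weights $w_1,\dots,w_m$ with $\sum_i w_i=1$. For $\mathbf{p}\in\mathcal{D}$ and $j\in[n]$ define \[u(\mathbf{p};j):=s(\mathbf{p};j)-\sum_{i=1}^m w_i\, s(\mathbf{p}_i;j).\] Let $\mathbf{p}^*\in\mathcal{D}$ be the quasi-arithmetic pool of $(\mathbf{p}_i,w_i)_{i=1}^m$ with respect to $\mathbf{g}$. Then the quantity $\min_{j\in[n]} u(\mathbf{p};j)$, as a function of $\mathbf{p}\in\mathcal{D}$, is uniquely maximized at $\mathbf{p}=\mathbf{p}^*$. Furthermore, $u(\mathbf{p}^*;j)$ is the same for all $j\in[n]$; this common value is non-negative, and it is positive unless all forecasts $\mathbf{p}_i$ with $w_i>0$ are equal.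
   Context: $\Delta^n\subseteq\mathbb{R}^n$ is the standard probability simplex with vertices $\delta_1,\dots,\delta_n$ ($\delta_j$ the $j$-th standard basis vector). An $n$-outcome forecast domain is a convex subset of $\Delta^n$ of dimension $n-1$ (containing a subset homeomorphic to $\mathbb{R}^{n-1}$). A proper scoring rule on $\mathcal{D}$ is a function $s:\mathcal{D}\times[n]\to\mathbb{R}$ such that for all $\mathbf{p}\in\mathcal{D}$, $\sum_j p(j)s(\mathbf{p};j)\ge\sum_j p(j)s(\mathbf{x};j)$ for all $\mathbf{x}\in\mathcal{D}$, with equality only when $\mathbf{x}=\mathbf{p}$. Its expected reward function is $G(\mathbf{p}):=\sum_j p(j)s(\mathbf{p};j)$; for continuous $s$, $G$ is differentiable and strictly convex, and $s(\mathbf{p};j)=G(\mathbf{p})+\langle\mathbf{g}(\mathbf{p}),\delta_j-\mathbf{p}\rangle$, where $\mathbf{g}=\nabla G$ is called the exposure function. Values of $\mathbf{g}$ are understood modulo translation by the all-ones vector $\mathbf{1}_n$ (equivalently, projected onto $\{\mathbf{x}:\sum_i x_i=0\}$). $s$ has convex exposure if the range of $\mathbf{g}$ is a convex set. The quasi-arithmetic (QA) pool of $(\mathbf{p}_i,w_i)$ with respect to $\mathbf{g}$ is the unique $\mathbf{p}^*\in\mathcal{D}$ with $\mathbf{g}(\mathbf{p}^* )=\sum_i w_i\mathbf{g}(\mathbf{p}_i)$ (equality modulo translation by $\mathbf{1}_n$); it exists by convex exposure. *)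

From mathcomp Require Import all_boot all_order all_algebra.
From mathcomp Require Import reals constructive_ereal.
Set Implicit Arguments. Unset Strict Implicit. Unset Printing Implicit Defensive.
Import Order.TTheory GRing.Theory Num.Theory.
Local Open Scope ring_scope.

Section Defs.
Variable R : realType.
Variable n : nat.
Notation vec := 'rV[R]_n.

Definition dotv (x y : vec) : R := \sum_(j < n) x ord0 j * y ord0 j.

Definition supn (x : vec) : R := \big[Num.max/0]_(j < n) `|x ord0 j|.

Definition delta (j : 'I_n) : vec := \row_(k < n) (if k == j then 1 else 0).

Definition ones : vec := const_mx 1.

Definition simplex (p : vec) : Prop :=
  (forall j, 0 <= p ord0 j) /\ \sum_(j < n) p ord0 j = 1.

Definition convex_set (D : vec -> Prop) : Prop :=
  forall x y t, D x -> D y -> 0 <= t <= 1 -> D (t *: x + (1 - t) *: y).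

(* An n-outcome forecast domain: a convex subset of Delta^n of dimension n-1,
   i.e. whose affine hull is the whole hyperplane {sum = 1}; equivalently it
   contains n affinely independent points (rows of an invertible matrix, since
   all points lie on an affine hyperplane not through the origin). *)
Definition forecast_domain (D : vec -> Prop) : Prop :=
  (forall p, D p -> simplex p) /\ convex_set D /\
  exists Q : 'M[R]_n, (forall k, D (row k Q)) /\ \rank Q = n.

Definition proper_scoring_rule (D : vec -> Prop) (s : vec -> 'I_n -> R) : Prop :=
  forall p x, D p -> D x ->
    \sum_(j < n) p ord0 j * s x j <= \sum_(j < n) p ord0 j * s p j /\
    (\sum_(j < n) p ord0 j * s x j = \sum_(j < n) p ord0 j * s p j -> x = p).

Definition continuous_on_dom (D : vec -> Prop) (s : vec -> 'I_n -> R) : Prop :=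
  forall p j, D p -> forall e : R, 0 < e -> exists2 d : R, 0 < d &
    forall x, D x -> supn (x - p) < d -> `|s x j - s p j| < e.

Definition exp_reward (s : vec -> 'I_n -> R) (p : vec) : R :=
  \sum_(j < n) p ord0 j * s p j.

(* Since D lies in the
   hyperplane {sum = 1}, such v is only determined modulo translation by 1_n. *)
Definition rel_gradient (D : vec -> Prop) (F : vec -> R) (p v : vec) : Prop :=
  forall e : R, 0 < e -> exists2 d : R, 0 < d &
    forall x, D x -> supn (x - p) < d ->
      `|F x - F p - dotv v (x - p)| <= e * supn (x - p).

Definition exposure_function (D : vec -> Prop) (s : vec -> 'I_n -> R)
    (g : vec -> vec) : Prop :=
  forall p, D p -> rel_gradient D (exp_reward s) p (g p).

Definition eq_mod1 (x y : vec) : Prop := exists c : R, x = y + c *: ones.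

Definition convex_exposure (D : vec -> Prop) (g : vec -> vec) : Prop :=
  forall p q t, D p -> D q -> 0 <= t <= 1 ->
    exists2 r, D r & eq_mod1 (g r) (t *: g p + (1 - t) *: g q).

Definition qa_pool (D : vec -> Prop) (g : vec -> vec) (m : nat)
    (P : 'I_m -> vec) (w : 'I_m -> R) (pstar : vec) : Prop :=
  D pstar /\ eq_mod1 (g pstar) (\sum_(i < m) w i *: g (P i)).

(* minimum over j in [n], as an extended real (+oo for n = 0) *)
Definition minj (f : 'I_n -> R) : \bar R := \big[Order.min/+oo%E]_(j < n) (f j)%:E.

End Defs.

From mathcomp Require Import all_boot all_order all_algebra.
From mathcomp Require Import reals constructive_ereal.
From mathcomp Require Import ring lra.
Import Order.TTheory GRing.Theory Num.Theory.
Set Implicit Arguments. Unset Strict Implicit.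
Local Open Scope ring_scope.

(* Properness says that s(x; .) is a subgradient of the expected reward:
   G(y) >= G(x) + <s(x; .), y - x> on D.  Comparing with the differentiability
   of G along segments, and using the continuity of s, gives
   <s(x; .), y - x> = <g(x), y - x> for y in D; since D is full-dimensional,
   s(x; j) = G(x) + <g(x), delta_j - x>.  At the pool g(p* ) is the weighted
   mean of the g(p_i) up to a multiple of 1_n, so u(p*; j) does not depend on
   j.  Averaging against p* identifies this constant as
   sum_i w_i (G(p* ) - E_p*[s(p_i; .)]) >= 0, while for p <> p* the
   p*-average of u(p; .) is strictly smaller by properness, so some u(p; j)
   falls below it. *)

Section RealFacts.
Variable R : realFieldType.

Lemma eq_of_forall_norm_le_mul (a b K : R) :
  0 <= K -> (forall e, 0 < e -> `|a - b| <= K * e) -> a = b.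
Proof.
move=> K0 abK; apply/eqP; rewrite -subr_eq0 -normr_le0.
apply/ler_addgt0Pr => e e0; rewrite add0r.
have K1 : 0 < K + 1 by lra.
apply: le_trans (abK _ (divr_gt0 e0 K1)) _.
by rewrite mulrA ler_pdivrMr //; nra.
Qed.

Lemma uniform_pos_bound (I : finType) (Q : I -> R -> Prop) :
  (forall i d d', 0 < d' <= d -> Q i d -> Q i d') ->
  (forall i, exists2 d, 0 < d & Q i d) -> exists2 d, 0 < d & forall i, Q i d.
Proof.
move=> Qmono Qex.
suff [d d0 Qd] : exists2 d, 0 < d & forall i, i \in enum I -> Q i d.
  by exists d => // i; apply: Qd; rewrite mem_enum.
elim: (enum I) => [|i r [d d0 Qd]]; first by exists 1.
have [di di0 Qi] := Qex i.
have dm0 : 0 < Num.min d di by rewrite lt_min d0 di0.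
exists (Num.min d di) => // k; rewrite in_cons => /predU1P [->|kr].
- by apply: Qmono Qi; rewrite dm0 ge_min lexx orbT.
- by apply: Qmono (Qd k kr); rewrite dm0 ge_min lexx.
Qed.

End RealFacts.

Section Vectors.
Variables (R : realType) (n : nat).
Implicit Types (v x y : 'rV[R]_n) (t c : R) (f : 'I_n -> R).

Lemma supn_ge0 v : 0 <= supn v.
Proof. by rewrite /supn; elim/big_ind: _ => // a b a0 b0; rewrite le_max a0. Qed.

Lemma le_supn v j : `|v ord0 j| <= supn v.
Proof. exact: le_bigmax. Qed.

Lemma supnZ_le t v : 0 <= t -> supn (t *: v) <= t * supn v.
Proof.
move=> t0; apply: bigmax_le => [|j _]; first exact: mulr_ge0 (supn_ge0 v).
by rewrite mxE normrM ger0_norm // ler_wpM2l // le_supn.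
Qed.

Lemma dotvC x y : dotv x y = dotv y x.
Proof. by apply: eq_bigr => j _; rewrite mulrC. Qed.

Lemma dotvB v x y : dotv v (x - y) = dotv v x - dotv v y.
Proof. by rewrite /dotv -sumrB; apply: eq_bigr => j _; rewrite !mxE mulrBr. Qed.

Lemma dotvZ v t x : dotv v (t *: x) = t * dotv v x.
Proof. by rewrite /dotv mulr_sumr; apply: eq_bigr => j _; rewrite mxE mulrCA. Qed.

Lemma dotv_delta v j : dotv v (delta R j) = v ord0 j.
Proof.
rewrite /dotv (bigD1 j) //= big1 => [|k /negPf kj]; last by rewrite mxE kj mulr0.
by rewrite mxE eqxx mulr1 addr0.
Qed.

Lemma simplex_dim_gt0 x : simplex x -> (0 < n)%N.
Proof.
case: n x => [|//] x [_]; rewrite big_ord0 => /eqP.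
by rewrite eq_sym oner_eq0.
Qed.

Lemma forecast_domain_orthogonal (D : 'rV[R]_n -> Prop) x v :
  forecast_domain D -> D x -> (forall z, D z -> dotv v (z - x) = 0) ->
  v = dotv v x *: ones R n.
Proof.
move=> [Dsimplex [_ [Q [DQ rankQ]]]] Dx vD.
have QTu : Q^T \in unitmx by rewrite unitmx_tr -row_free_unit /row_free rankQ.
have onesQT : ones R n *m Q^T = ones R n.
  apply/rowP => k; rewrite !mxE; apply: etrans _ (Dsimplex _ (DQ k)).2.
  by apply: eq_bigr => j _; rewrite !mxE mul1r.
apply: (can_inj (mulmxK QTu)); rewrite -scalemxAl onesQT.
apply/rowP => k; rewrite !mxE mulr1.
have /eqP := vD _ (DQ k); rewrite dotvB subr_eq0 => /eqP <-.
by apply: eq_bigr => j _; rewrite !mxE.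
Qed.

Lemma minj_le f j : (minj f <= (f j)%:E)%E.
Proof. exact: bigmin_le. Qed.

Lemma minj_const f c : (0 < n)%N -> (forall j, f j = c) -> minj f = c%:E.
Proof.
move=> n0 fc; apply/eqP; rewrite eq_le; apply/andP; split.
  by rewrite -(fc (Ordinal n0)) minj_le.
by apply: le_bigmin => [|j _]; rewrite ?leey ?fc.
Qed.

End Vectors.

Section ScoringRule.
Variables (R : realType) (n : nat) (s : 'rV[R]_n -> 'I_n -> R).
Implicit Types (p q x y z : 'rV[R]_n) (t : R).

Definition expected_score p q : R := \sum_(j < n) p ord0 j * s q j.

Lemma exp_rewardE p : exp_reward s p = expected_score p p.
Proof. by []. Qed.

Lemma expected_scoreB p p' q :
  expected_score (p - p') q = expected_score p q - expected_score p' q.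
Proof.
by rewrite /expected_score -sumrB; apply: eq_bigr => j _; rewrite !mxE mulrBl.
Qed.

Lemma expected_scoreZ t p q : expected_score (t *: p) q = t * expected_score p q.
Proof.
by rewrite /expected_score mulr_sumr; apply: eq_bigr => j _; rewrite mxE mulrA.
Qed.

Lemma expected_score_const p q c :
  simplex p -> (forall j, s q j = c) -> expected_score p q = c.
Proof.
move=> [_ sum_p] sq; rewrite /expected_score; under eq_bigr do rewrite sq.
by rewrite -mulr_suml sum_p mul1r.
Qed.

Lemma expected_score_lt p q c :
  simplex p -> expected_score p q < c -> exists j, s q j < c.
Proof.
move=> [p0 sum_p] lt_c; apply/existsP; apply: contraLR lt_c.
rewrite negb_exists -leNgt => /forallP s_ge; rewrite -[c]mul1r -sum_p mulr_suml.
by apply: ler_sum => j _; rewrite ler_wpM2l // leNgt s_ge.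
Qed.

Definition score_divergence p q : R := exp_reward s p - expected_score p q.

Variable D : 'rV[R]_n -> Prop.
Hypothesis proper : proper_scoring_rule D s.

Lemma exp_reward_subgradient x y : D x -> D y ->
  exp_reward s x + expected_score (y - x) x <= exp_reward s y.
Proof.
move=> Dx Dy; rewrite expected_scoreB exp_rewardE addrC subrK.
exact: (proper Dy Dx).1.
Qed.

Lemma score_divergence_ge0 p q : D p -> D q -> 0 <= score_divergence p q.
Proof. by move=> Dp Dq; rewrite subr_ge0; exact: (proper Dp Dq).1. Qed.

Lemma score_divergence_gt0 p q : D p -> D q -> q <> p -> 0 < score_divergence p q.
Proof.
move=> Dp Dq qp; rewrite lt_def score_divergence_ge0 // andbT subr_eq0.
by apply/eqP => /esym /(proper Dp Dq).2.
Qed.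

Hypothesis cont : continuous_on_dom D s.
Variable g : 'rV[R]_n -> 'rV[R]_n.
Hypothesis expo : exposure_function D s g.

(* On the segment from x to z, G grows at least at rate <s(x), z - x> and at
   most at the rate read off at the far end; differentiability and continuity
   squeeze both rates to <g(x), z - x>. *)
Lemma expected_score_exposure x z : convex_set D -> D x -> D z ->
  expected_score (z - x) x = dotv (g x) (z - x).
Proof.
move=> convD Dx Dz; set d := z - x.
pose xt t := t *: z + (1 - t) *: x.
have xtB t : xt t - x = t *: d by apply/rowP => k; rewrite !mxE; ring.
have Dxt t : 0 <= t <= 1 -> D (xt t) by move=> t01; apply: convD.
have pinch t : 0 <= t <= 1 -> t * expected_score d x
    <= exp_reward s (xt t) - exp_reward s x <= t * expected_score d (xt t).
  move=> t01; have lo := exp_reward_subgradient Dx (Dxt t t01).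
  have hi := exp_reward_subgradient (Dxt t t01) Dx.
  rewrite xtB expected_scoreZ in lo.
  rewrite -opprB xtB -scaleNr expected_scoreZ in hi.
  by apply/andP; split; lra.
set N := supn d; set M := \sum_(j < n) `|d ord0 j|.
have N0 : 0 <= N := supn_ge0 d.
have M0 : 0 <= M by apply: sumr_ge0.
apply: (eq_of_forall_norm_le_mul (addr_ge0 N0 M0)) => e e0.
have [d0 d00 Gd0] := expo Dx e0.
have [d1 d10 sd1] := uniform_pos_bound
  (Q := fun j r => forall y, D y -> supn (y - x) < r -> `|s y j - s x j| < e)
  (fun j r r' rr' sr y Dy yr => sr y Dy (lt_le_trans yr (andP rr').2))
  (fun j => cont j Dx e0).
have [t [t0 t1 tN]] : exists t, [/\ 0 < t, t <= 1 & t * N < Num.min d0 d1].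
  set r := Num.min d0 d1; have r0 : 0 < r by rewrite lt_min d00 d10.
  have rN1 : 0 < r + N + 1 by lra.
  exists (r / (r + N + 1)); split; first exact: divr_gt0.
    by rewrite ler_pdivrMr //; lra.
  by rewrite mulrAC ltr_pdivrMr //; nra.
have t01 : 0 <= t <= 1 by rewrite ltW.
have : supn (xt t - x) < Num.min d0 d1.
  by rewrite xtB; apply: le_lt_trans (supnZ_le _ (ltW t0)) tN.
rewrite lt_min => /andP [supt0 supt1].
have hG : `|exp_reward s (xt t) - exp_reward s x - t * dotv (g x) d| <= e * (t * N).
  have := Gd0 _ (Dxt t t01) supt0; rewrite xtB dotvZ => /le_trans; apply.
  by rewrite ler_wpM2l ?(ltW e0) // supnZ_le ?ltW.
have hS : expected_score d (xt t) - expected_score d x <= M * e.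
  rewrite /expected_score -sumrB mulr_suml; apply: ler_sum => j _.
  rewrite -mulrBr; apply: le_trans (ler_norm _) _; rewrite normrM ler_wpM2l //.
  exact/ltW/sd1/supt1/Dxt.
have [lo hi] := andP (pinch t t01).
move: hG; rewrite ler_norml => /andP [hGlo hGhi].
have tMe : 0 <= t * (M * e) := mulr_ge0 (ltW t0) (mulr_ge0 M0 (ltW e0)).
by rewrite ler_norml; apply/andP; split; rewrite -(ler_pM2l t0); nra.
Qed.

Lemma score_exposureE x j : forecast_domain D -> D x ->
  s x j = exp_reward s x + dotv (g x) (delta R j - x).
Proof.
move=> fD Dx; set v := \row_k s x k - g x.
have vD z : D z -> dotv v (z - x) = 0.
  move=> Dz; rewrite dotvC dotvB [dotv _ (g x)]dotvC.
  rewrite -(expected_score_exposure fD.2.1 Dx Dz); apply/eqP; rewrite subr_eq0.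
  by apply/eqP/eq_bigr => k _; rewrite mxE.
have vx : dotv v x = exp_reward s x - dotv (g x) x.
  rewrite dotvC dotvB [dotv x (g x)]dotvC; congr (_ - _).
  by apply: eq_bigr => k _; rewrite mxE.
have := congr1 (fun u : 'rV[R]_n => u ord0 j) (forecast_domain_orthogonal fD Dx vD).
rewrite !mxE mulr1 vx dotvB dotv_delta.
lra.
Qed.

End ScoringRule.

Section Pooling.
Variables (R : realType) (n m : nat) (s : 'rV[R]_n -> 'I_n -> R).
Variables (P : 'I_m -> 'rV[R]_n) (w : 'I_m -> R).
Hypotheses (w_ge0 : forall i, 0 <= w i) (w_sum1 : \sum_(i < m) w i = 1).

Definition score_gap p j := s p j - \sum_(i < m) w i * s (P i) j.

Lemma expected_score_gap p q : expected_score score_gap p q =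
  expected_score s p q - \sum_(i < m) w i * expected_score s p (P i).
Proof.
rewrite /expected_score /score_gap; under eq_bigr do rewrite mulrBr.
rewrite sumrB; congr (_ - _); under eq_bigr do rewrite mulr_sumr.
rewrite exchange_big; apply: eq_bigr => i _; rewrite mulr_sumr.
by apply: eq_bigr => j _; rewrite mulrCA.
Qed.

Lemma score_gap_const_value p c : simplex p -> (forall j, score_gap p j = c) ->
  c = \sum_(i < m) w i * score_divergence s p (P i).
Proof.
move=> Sp gap_c; rewrite -(expected_score_const Sp gap_c) expected_score_gap.
rewrite /score_divergence; under [X in _ = X]eq_bigr do rewrite mulrBr.
by rewrite sumrB -mulr_suml w_sum1 mul1r.
Qed.

Variables (D : 'rV[R]_n -> Prop) (g : 'rV[R]_n -> 'rV[R]_n) (pstar : 'rV[R]_n).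
Hypotheses (fD : forecast_domain D) (proper : proper_scoring_rule D s).
Hypotheses (DP : forall i, D (P i)) (Dpstar : D pstar).

Lemma pool_divergence_ge0 :
  0 <= \sum_(i < m) w i * score_divergence s pstar (P i).
Proof.
apply: sumr_ge0 => i _.
by rewrite mulr_ge0 // (score_divergence_ge0 proper Dpstar (DP i)).
Qed.

Lemma pool_divergence_gt0 : (exists i k, 0 < w i /\ 0 < w k /\ P i <> P k) ->
  0 < \sum_(i < m) w i * score_divergence s pstar (P i).
Proof.
move=> [i [k [wi [wk Pik]]]].
have [i' [wi' Pi']] : exists i', 0 < w i' /\ P i' <> pstar.
  have [Pi|Pi] := eqVneq (P i) pstar; last by exists i; split=> //; apply/eqP.
  by exists k; split=> // Pk; apply: Pik; rewrite Pi Pk.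
rewrite (bigD1 i') //= ltr_pwDl //.
  by rewrite mulr_gt0 // (score_divergence_gt0 proper Dpstar (DP i')).
apply: sumr_ge0 => i0 _.
by rewrite mulr_ge0 // (score_divergence_ge0 proper Dpstar (DP i0)).
Qed.

Lemma score_gap_lt_pool p c :
  (forall j, score_gap pstar j = c) -> D p -> p <> pstar ->
  exists j, score_gap p j < c.
Proof.
move=> gap_c Dp p_ne; have Spstar := fD.1 _ Dpstar.
have : expected_score score_gap pstar p < expected_score score_gap pstar pstar.
  rewrite !expected_score_gap ltrBlDr subrK -subr_gt0.
  exact (score_divergence_gt0 proper Dpstar Dp p_ne).
by rewrite (expected_score_const Spstar gap_c); apply: expected_score_lt.
Qed.

Hypotheses (cont : continuous_on_dom D s) (expo : exposure_function D s g).
Hypothesis pool : eq_mod1 (g pstar) (\sum_(i < m) w i *: g (P i)).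

Lemma score_gap_pool_const : exists c, forall j, score_gap pstar j = c.
Proof.
have [c1 g_pool] := pool.
pose a x := exp_reward s x - dotv (g x) x.
have sE x j : D x -> s x j = a x + g x ord0 j.
  move=> Dx; rewrite (score_exposureE proper cont expo j fD Dx).
  by rewrite dotvB dotv_delta /a; ring.
exists (a pstar + c1 - \sum_(i < m) w i * a (P i)) => j.
have g_pool_j : g pstar ord0 j = \sum_(i < m) w i * g (P i) ord0 j + c1.
  by rewrite g_pool !mxE summxE mulr1; under eq_bigr do rewrite mxE.
rewrite /score_gap sE // g_pool_j.
under [X in _ - X = _]eq_bigr do rewrite (sE _ _ (DP _)) mulrDr.
rewrite big_split /=; ring.
Qed.

End Pooling.

Theorem theorem4p1 (R : realType) (n : nat) (D : 'rV[R]_n -> Prop)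
  (s : 'rV[R]_n -> 'I_n -> R) (g : 'rV[R]_n -> 'rV[R]_n)
  (m : nat) (P : 'I_m -> 'rV[R]_n) (w : 'I_m -> R) (pstar : 'rV[R]_n) :
  forecast_domain D ->
  proper_scoring_rule D s ->
  continuous_on_dom D s ->
  exposure_function D s g ->
  convex_exposure D g ->
  (forall i, D (P i)) ->
  (forall i, 0 <= w i) ->
  \sum_(i < m) w i = 1 ->
  qa_pool D g P w pstar ->
  let u := fun (p : 'rV[R]_n) (j : 'I_n) => s p j - \sum_(i < m) w i * s (P i) j in
  (forall p, D p -> p <> pstar -> (minj (u p) < minj (u pstar))%E) /\
  exists c : R,
    (forall j, u pstar j = c) /\ 0 <= c /\
    ((exists i k, 0 < w i /\ 0 < w k /\ P i <> P k) -> 0 < c).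
Proof.
(* Convex exposure only guarantees that the pool exists; here it is given. *)
move=> fD proper cont expo _ DP w_ge0 w_sum1 [Dpstar pool] u.
have [c gap_c] := score_gap_pool_const fD proper DP Dpstar cont expo pool.
have Spstar := fD.1 _ Dpstar.
split=> [p Dp p_ne|].
  have [j gap_lt] := score_gap_lt_pool fD proper Dpstar gap_c Dp p_ne.
  rewrite (minj_const (simplex_dim_gt0 Spstar) gap_c).
  by apply: le_lt_trans (minj_le _ j) _; rewrite lte_fin.
exists c; split=> //; rewrite (score_gap_const_value w_sum1 Spstar gap_c).
split; first exact (pool_divergence_ge0 w_ge0 proper DP Dpstar).
exact (pool_divergence_gt0 w_ge0 proper DP Dpstar).
Qed.
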